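(* Let $p$ be a prime, $\Gamma\subset\mathbb{F}_p^*$ a multiplicative subgroup, and $A,B\subseteq\mathbb{F}_p$ two sets. Let $g:\mathbb{F}_p\to\mathbb{R}_{\ge0}$ be an even $\Gamma$-invariant function supported on $S_\Gamma(A-A)$. Suppose that $A-B\subseteq\Gamma\sqcup\{0\}$ and $$|B|\sum_x g(x)(A\circ A)(x)\ge3\sum_x g(x)(A\circ B)(x).$$ Then $$\left(\sum_x g(x)(A\circ A)(x)\right)^2\ll\frac{\mathsf{T}(A,B)}{|B|^2|\Gamma|}\cdot\sum_x g^2(x)(\Gamma\circ\Gamma)(x).$$
   Context: For $Q\subseteq\mathbb{F}_p$, $S_\Gamma(Q)$ is the minimal $\Gamma$-invariant set containing $Q$ (i.e. $\Gamma Q=\{\gamma x:\gamma\in\Gamma,x\in Q\}$). Sets are identified with indicator functions; $(X\circ Y)(x)=\sum_yX(y)Y(y+x)$. $g$ even means $g(-x)=g(x)$; $\Gamma$-invariant means $g(\gamma x)=g(x)$ for $\gamma\in\Gamma$. $\mathsf{E}^\times(X,Y)=|\{x_1y_1=x_2y_2: x_i\in X,y_i\in Y\}|$ and $\mathsf{T}(A,B)=\sum_{b,b'\in B}\mathsf{E}^\times(A-b,A-b')$. $X\ll Y$ means $X\le cY$ with an absolute constant $c$. *)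

From HB Require Import structures.
From mathcomp Require Import all_boot all_order all_algebra.
From mathcomp Require Import Rstruct.
From Stdlib Require Import Rdefinitions.
Set Implicit Arguments. Unset Strict Implicit. Unset Printing Implicit Defensive.
Import Order.TTheory GRing.Theory Num.Theory.
Local Open Scope ring_scope.

Section Defs.
Variable p : nat.
Local Notation F := 'F_p.

Definition mult_subgroup (G : {set F}) : Prop :=
  [/\ 0 \notin G, 1 \in G,
      (forall x y, x \in G -> y \in G -> x * y \in G) &
      (forall x, x \in G -> x^-1 \in G)].

Definition diffset (X Y : {set F}) : {set F} := [set x - y | x in X, y in Y].

Definition transl (X : {set F}) (b : F) : {set F} := [set x - b | x in X].

Definition SGamma (G Q : {set F}) : {set F} := [set g * x | g in G, x in Q].

Definition ind (X : {set F}) (x : F) : R := (x \in X)%:R.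

Definition conv (X Y : {set F}) (x : F) : R :=
  \sum_(y : F) ind X y * ind Y (y + x).

Definition Emul (X Y : {set F}) : nat :=
  #|[set q : F * F * F * F |
      [&& q.1.1.1 \in X, q.1.1.2 \in Y, q.1.2 \in X, q.2 \in Y &
          q.1.1.1 * q.1.1.2 == q.1.2 * q.2]]|.

Definition Tq (A B : {set F}) : nat :=
  (\sum_(b in B) \sum_(b' in B) Emul (transl A b) (transl A b'))%N.
End Defs.

From HB Require Import structures.
From mathcomp Require Import all_boot all_order all_algebra.
From mathcomp Require Import Rstruct.
From Stdlib Require Import Rdefinitions.
From mathcomp Require Import ring lra.
Import Order.TTheory GRing.Theory Num.Theory.
Local Open Scope ring_scope.
Set Implicit Arguments. Unset Strict Implicit. Unset Printing Implicit Defensive.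

(** Removing 0 from the translates [A - b], [b \in B], costs at most
  [2 \sum_x g x (A o B)(x)] (as [g] is even), which the hypothesis absorbs.
  The translates punctured at 0 lie in [Gam], so by [Gam]-invariance the
  weight [g (y - x) = g (y/x - 1)] of a pair only depends on the ratio
  [y/x]. Grouping the pairs by ratio and applying Cauchy-Schwarz in the
  ratio bounds the square of the punctured sum by
  [|Gam|^-1 \sum_x g x^2 (Gam o Gam)(x)] times [\sum_l (number of pairs
  with ratio l)^2], and the latter is at most [T(A, B)]: equal ratios
  [y/x = y'/x'] give the solution [y x' = x y'] of the energy equation. *)

Lemma sum_natr_eq_mul (S : pzSemiRingType) (I : finType) (a : I) (G : I -> S) :
  \sum_i (i == a)%:R * G i = G a.
Proof.
rewrite (bigD1 a) //= eqxx mul1r big1 ?addr0 // => i /negbTE->.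
by rewrite mul0r.
Qed.

Lemma sqr_sum_mul_le (S : realFieldType) (I : finType) (u v : I -> S) :
  (\sum_i u i * v i) ^+ 2 <= (\sum_i u i ^+ 2) * (\sum_i v i ^+ 2).
Proof.
have : 0 <= \sum_i \sum_j (u i * v j - u j * v i) ^+ 2.
  by apply: sumr_ge0 => i _; apply: sumr_ge0 => j _; apply: sqr_ge0.
have -> : \sum_i \sum_j (u i * v j - u j * v i) ^+ 2 =
    \sum_i \sum_j u i ^+ 2 * v j ^+ 2 + \sum_i \sum_j u j ^+ 2 * v i ^+ 2
    - 2 * \sum_i \sum_j u i * v i * (u j * v j).
  rewrite mulr_sumr -big_split -sumrB; apply: eq_bigr => i _.
  by rewrite mulr_sumr -big_split -sumrB; apply: eq_bigr => j _ /=; ring.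
rewrite [X in _ + X - _]exchange_big -!big_distrlr /= -expr2; lra.
Qed.

(* The error term [e] is absorbed: [n s <= m + 2 e <= m + 2 n s / 3]. *)
Lemma sqr_le_absorb (S : realFieldType) (n s m e k : S) :
  0 < n -> 0 <= s -> n * s <= m + 2 * e -> 3 * e <= n * s -> m ^+ 2 <= k ->
  s ^+ 2 <= 9 * k / n ^+ 2.
Proof.
move=> n_gt0 s_ge0 split_le absorb mk.
have ns_ge0 : 0 <= n * s by rewrite pmulr_rge0.
rewrite ler_pdivlMr ?exprn_gt0 // mulrC -exprMn.
apply: le_trans (_ : (3 * m) ^+ 2 <= _); last by rewrite exprMn; lra.
by rewrite ler_sqr ?nnegrE //; lra.
Qed.

Section Convolution.
Variable p : nat.
Local Notation F := 'F_p.
Implicit Types (X Y A B : {set F}) (x y b : F).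

Lemma sum_ind X : \sum_x ind X x = #|X|%:R.
Proof.
rewrite -sum1_card natr_sum [RHS]big_mkcond; apply: eq_bigr => x _.
by rewrite /ind; case: (x \in X).
Qed.

Lemma mem_transl X b x : (x \in transl X b) = (x + b \in X).
Proof.
apply/imsetP/idP => [[a aX ->]|xbX]; first by rewrite subrK.
by exists (x + b); rewrite ?addrK.
Qed.

Lemma ind_transl X b x : ind (transl X b) x = ind X (x + b).
Proof. by rewrite /ind mem_transl. Qed.

Lemma conv_ge0 X Y x : 0 <= conv X Y x.
Proof. by apply: sumr_ge0 => y _; rewrite mulr_ge0 ?ler0n. Qed.

Lemma sum_mul_conv X Y (G : F -> R) :
  \sum_x G x * conv X Y x = \sum_y \sum_z ind X y * ind Y z * G (z - y).
Proof.
under eq_bigr do rewrite mulr_sumr.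
rewrite exchange_big; apply: eq_bigr => y _.
rewrite [RHS](reindex_inj (addrI y)); apply: eq_bigr => x _ /=.
by rewrite addrC addrK mulrC.
Qed.

Lemma conv_transl X Y b x : conv (transl X b) (transl Y b) x = conv X Y x.
Proof.
rewrite /conv (reindex_inj (addIr (- b))); apply: eq_bigr => y _ /=.
by rewrite !ind_transl subrK addrAC subrK.
Qed.

Lemma conv_opp X Y x : conv X Y (- x) = conv Y X x.
Proof.
rewrite /conv (reindex_inj (addIr x)); apply: eq_bigr => y _ /=.
by rewrite addrK mulrC.
Qed.

Lemma conv_setD1_le X x :
  conv X X x <= conv (X :\ 0) (X :\ 0) x + ind X x + ind X (- x).
Proof.
have -> : ind X x = \sum_y (y == 0)%:R * ind X (y + x).
  by rewrite sum_natr_eq_mul add0r.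
have -> : ind X (- x) = \sum_y (y + x == 0)%:R * ind X y.
  by rewrite -sum_natr_eq_mul; apply: eq_bigr => y _; rewrite addr_eq0.
rewrite /conv -!big_split /=; apply: ler_sum => y _.
rewrite /ind !in_setD1.
by case: (y \in X); case: (y + x \in X); case: (y == 0); case: (y + x == 0) => /=; lra.
Qed.

Lemma EmulE X Y :
  (Emul X Y)%:R = \sum_x1 \sum_y1 \sum_x2 \sum_y2
    ([&& x1 \in X, y1 \in Y, x2 \in X, y2 \in Y & x1 * y1 == x2 * y2]%:R : R).
Proof.
rewrite !pair_bigA /Emul -sum1_card natr_sum [LHS]big_mkcond /=.
by apply: eq_bigr => [[[[x1 y1] x2] y2]] _; rewrite inE; case: ifP.
Qed.

Definition quot_count X (l : F) : R :=
  \sum_x \sum_y ind X x * ind X y * (y / x == l)%:R.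

Lemma sum_quot_count_mul_le X Y :
  \sum_l quot_count (X :\ 0) l * quot_count (Y :\ 0) l <= (Emul X Y)%:R.
Proof.
rewrite EmulE /quot_count.
under eq_bigr => l _ do rewrite [X in X * _]exchange_big big_distrlr /=.
rewrite exchange_big; apply: ler_sum => y _.
rewrite exchange_big; apply: ler_sum => x' _.
under eq_bigr => l _ do rewrite big_distrlr /=.
rewrite exchange_big; apply: ler_sum => x _.
rewrite exchange_big; apply: ler_sum => y' _.
rewrite (eq_bigr (fun l => (l == y / x)%:R * (ind (X :\ 0) x * ind (X :\ 0) y *
  (ind (Y :\ 0) x' * ind (Y :\ 0) y' * (y' / x' == l)%:R)))); last first.
  by move=> l _; rewrite eq_sym; ring.
rewrite sum_natr_eq_mul /ind -!natrM !mulnb ler_nat !in_setD1.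
case: andP => // -[/and3P[/andP[x0 ->] _ ->] /andP[/and3P[/andP[x'0 ->] _ ->]]].
by rewrite eqr_div // => /eqP<-; rewrite mulrC eqxx.
Qed.

Lemma sum_sqr_quot_count_le_Tq A B :
  \sum_l (\sum_(b in B) quot_count (transl A b :\ 0) l) ^+ 2 <= (Tq A B)%:R.
Proof.
rewrite /Tq natr_sum; under [leRHS]eq_bigr do rewrite natr_sum.
under [leLHS]eq_bigr do rewrite expr2 big_distrlr /=.
rewrite exchange_big; apply: ler_sum => b _.
rewrite exchange_big; apply: ler_sum => b' _.
exact: sum_quot_count_mul_le.
Qed.
End Convolution.

Section EvenWeight.
Variables (p : nat) (g : 'F_p -> R).
Hypotheses (g_ge0 : forall x, 0 <= g x) (g_even : forall x, g (- x) = g x).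
Implicit Types (X Y A B : {set 'F_p}).

Lemma sum_mul_convC X Y : \sum_x g x * conv X Y x = \sum_x g x * conv Y X x.
Proof.
rewrite (reindex_inj oppr_inj); apply: eq_bigr => x _ /=.
by rewrite g_even conv_opp.
Qed.

Lemma sum_mul_conv_setD1_le X :
  \sum_x g x * conv X X x <=
  \sum_x g x * conv (X :\ 0) (X :\ 0) x + 2 * \sum_x g x * ind X x.
Proof.
have sum_ind_opp : \sum_x g x * ind X (- x) = \sum_x g x * ind X x.
  by rewrite (reindex_inj oppr_inj); apply: eq_bigr => x _ /=; rewrite g_even opprK.
rewrite mulr_natl mulr2n -{2}sum_ind_opp -!big_split; apply: ler_sum => x _ /=.
by rewrite -!mulrDr addrA; apply: ler_wpM2l; [exact: g_ge0 | exact: conv_setD1_le].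
Qed.

Lemma sum_transl_mul_conv_le A B :
  #|B|%:R * \sum_x g x * conv A A x <=
  \sum_(b in B) \sum_x g x * conv (transl A b :\ 0) (transl A b :\ 0) x
  + 2 * \sum_x g x * conv A B x.
Proof.
have -> : \sum_x g x * conv A B x = \sum_(b in B) \sum_x g x * ind (transl A b) x.
  rewrite sum_mul_convC /conv; under eq_bigr do rewrite mulr_sumr.
  rewrite exchange_big [RHS]big_mkcond; apply: eq_bigr => b _ /=.
  rewrite {1}/ind; case: (b \in B) => /=; last by rewrite big1 // => x _; rewrite !mul0r mulr0.
  by apply: eq_bigr => x _; rewrite mul1r ind_transl addrC.
rewrite mulr_natl -sumr_const mulr_sumr -big_split; apply: ler_sum => b _ /=.
under eq_bigr do rewrite -(conv_transl _ _ b).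
exact: sum_mul_conv_setD1_le.
Qed.
End EvenWeight.

Section Subgroup.
Variables (p : nat) (Gam : {set 'F_p}).
Hypothesis Gam_sub : mult_subgroup Gam.

Lemma subgroup_neq0 x : x \in Gam -> x != 0.
Proof. by case: Gam_sub => G0 _ _ _; apply: contraTneq => ->. Qed.

Lemma subgroup_card_gt0 : 0 < #|Gam|%:R :> R.
Proof. by case: Gam_sub => _ G1 _ _; rewrite ltr0n card_gt0; apply/set0Pn; exists 1. Qed.

Lemma subgroup_mulr_in u l : u \in Gam -> (u * l \in Gam) = (l \in Gam).
Proof.
case: Gam_sub => _ _ GM GV uG; apply/idP/idP => [ulG|]; last exact: GM.
by have := GM _ _ (GV _ uG) ulG; rewrite mulrA mulVf ?mul1r ?subgroup_neq0.
Qed.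

Variable g : 'F_p -> R.
Hypothesis g_inv : forall gam x, gam \in Gam -> g (gam * x) = g x.

Lemma sum_mul_conv_quot (X : {set 'F_p}) : X \subset Gam ->
  \sum_x g x * conv X X x = \sum_l ind Gam l * g (l - 1) * quot_count X l.
Proof.
move=> /subsetP XG; rewrite sum_mul_conv /quot_count.
under [RHS]eq_bigr do rewrite mulr_sumr.
rewrite [RHS]exchange_big; apply: eq_bigr => x _.
under [RHS]eq_bigr do rewrite mulr_sumr.
rewrite [RHS]exchange_big; apply: eq_bigr => y _ /=.
rewrite (eq_bigr (fun l => (l == y / x)%:R *
  (ind Gam l * g (l - 1) * (ind X x * ind X y)))); last by move=> l _; rewrite eq_sym; ring.
rewrite sum_natr_eq_mul.
have [xX|xX] := boolP (x \in X); last by rewrite /ind (negbTE xX) !(mul0r, mulr0).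
have [yX|yX] := boolP (y \in X); last by rewrite /ind (negbTE yX) !(mul0r, mulr0).
rewrite /ind xX yX.
have x0 := subgroup_neq0 (XG _ xX).
have -> : y - x = x * (y / x - 1) by field.
have yxG : y / x \in Gam.
  by rewrite -(subgroup_mulr_in _ (XG _ xX)) mulrC divfK // XG.
by rewrite g_inv ?(XG _ xX) // yxG !mul1r mulr1.
Qed.

Lemma sum_sqr_mul_conv_subgroup :
  \sum_x g x ^+ 2 * conv Gam Gam x =
  #|Gam|%:R * \sum_l (ind Gam l * g (l - 1)) ^+ 2.
Proof.
rewrite sum_mul_conv -sum_ind mulr_suml; apply: eq_bigr => u _.
have [uG|uG] := boolP (u \in Gam); last first.
  by rewrite /ind (negbTE uG) mul0r big1 // => w _; rewrite !mul0r.
rewrite (reindex_inj (mulfI (subgroup_neq0 uG))) mulr_sumr; apply: eq_bigr => l _ /=.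
have -> : u * l - u = u * (l - 1) by ring.
rewrite g_inv // /ind subgroup_mulr_in // uG.
by case: (l \in Gam) => /=; ring.
Qed.

Section PuncturedTranslates.
Variables A B : {set 'F_p}.
Hypothesis AB_sub : forall a b, a \in A -> b \in B -> (a - b \in Gam) || (a - b == 0).

Lemma transl_setD1_sub b : b \in B -> transl A b :\ 0 \subset Gam.
Proof.
move=> bB; apply/subsetP => x; rewrite in_setD1 mem_transl => /andP[x0 xbA].
by have := AB_sub xbA bB; rewrite addrK (negbTE x0) orbF.
Qed.

Lemma sqr_sum_transl_mul_conv_le :
  (\sum_(b in B) \sum_x g x * conv (transl A b :\ 0) (transl A b :\ 0) x) ^+ 2
  <= (\sum_x g x ^+ 2 * conv Gam Gam x) / #|Gam|%:R * (Tq A B)%:R.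
Proof.
have -> : \sum_(b in B) \sum_x g x * conv (transl A b :\ 0) (transl A b :\ 0) x
    = \sum_l ind Gam l * g (l - 1) * \sum_(b in B) quot_count (transl A b :\ 0) l.
  under eq_bigr => b bB do rewrite (sum_mul_conv_quot (transl_setD1_sub bB)).
  by rewrite exchange_big; apply: eq_bigr => l _; rewrite mulr_sumr.
apply: le_trans (sqr_sum_mul_le _ _) _.
rewrite sum_sqr_mul_conv_subgroup [#|Gam|%:R * _]mulrC mulfK ?gt_eqF ?subgroup_card_gt0 //.
apply: ler_wpM2l; last exact: sum_sqr_quot_count_le_Tq.
by apply: sumr_ge0 => l _; apply: sqr_ge0.
Qed.
End PuncturedTranslates.
End Subgroup.

Theorem proposition4 :
  exists c : R, 0 < c /\
  forall (p : nat) (Gam A B : {set 'F_p}) (g : 'F_p -> R),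
    prime p ->
    mult_subgroup Gam ->
    B != set0 ->
    (forall x, 0 <= g x) ->
    (forall x, g (- x) = g x) ->
    (forall gam x, gam \in Gam -> g (gam * x) = g x) ->
    (forall x, x \notin SGamma Gam (diffset A A) -> g x = 0) ->
    (forall a b, a \in A -> b \in B -> (a - b \in Gam) || (a - b == 0)) ->
    (#|B|%:R * \sum_(x : 'F_p) g x * conv A A x
       >= 3 * \sum_(x : 'F_p) g x * conv A B x) ->
    (\sum_(x : 'F_p) g x * conv A A x) ^+ 2
      <= c * ((Tq A B)%:R / (#|B|%:R ^+ 2 * #|Gam|%:R))
           * \sum_(x : 'F_p) g x ^+ 2 * conv Gam Gam x.
Proof.
exists 9; split; first lra.
move=> p Gam A B g _ Gam_sub B_neq0 g_ge0 g_even g_inv _ AB_sub absorb.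
have sigma_ge0 : 0 <= \sum_x g x * conv A A x.
  by apply: sumr_ge0 => x _; rewrite mulr_ge0 ?conv_ge0.
have B_gt0 : 0 < #|B|%:R :> R by rewrite ltr0n card_gt0.
apply: le_trans (sqr_le_absorb B_gt0 sigma_ge0
  (sum_transl_mul_conv_le g_ge0 g_even A B) absorb
  (sqr_sum_transl_mul_conv_le Gam_sub g_inv AB_sub)) _.
rewrite le_eqVlt; apply/orP; left; apply/eqP.
by field; rewrite !gt_eqF ?(subgroup_card_gt0 Gam_sub).
Qed.
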